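(* For every positive integer $m$, the Bayesian Price of Anarchy of the proportional allocation mechanism over instances with $m$ resources in which all valuation functions are concave is at least $\frac{\sqrt{m}}{2}$. That is, there exist an instance with $m$ resources and concave valuations (in every realization) and a Bayesian Nash equilibrium $\mathbf{B}$ of it such that $\mathbb{E}_{\mathbf{v}}[\mathrm{SW}(\mathbf{o}^{\mathbf{v}})] \ge \frac{\sqrt{m}}{2}\, \mathbb{E}_{\mathbf{v},\mathbf{b}\sim \mathbf{B}(\mathbf{v})}[\mathrm{SW}(\mathbf{b})]$.
   Context: There are $n$ agents and $m$ divisible resources, each of unit supply. Each agent $i$ has a valuation $v_i:[0,1]^m\to\mathbb{R}_{\ge 0}$ with $v_i(\mathbf{0})=0$ that is monotone non-decreasing (componentwise). A valuation is concave if it is a concave function on $[0,1]^m$. Proportional allocation mechanism: each agent $i$ submits a bid $b_{ij}\ge 0$ for every resource $j$; agent $i$ receives the fraction $x_{ij}(\mathbf{b})=b_{ij}/\sum_{k=1}^n b_{kj}$ of resource $j$ (if all bids on $j$ are $0$, the allocation of $j$ is defined arbitrarily but consistently) and pays $q_i(\mathbf{b})=\sum_{j}b_{ij}$. The utility is $u_i(\mathbf{b})=v_i(x_i(\mathbf{b}))-q_i(\mathbf{b})$, where $x_i=(x_{ij})_j$. The social welfare of an allocation is $\mathrm{SW}(\mathbf{x})=\sum_i v_i(x_i)$ and $\mathrm{SW}(\mathbf{b})=\mathrm{SW}(\mathbf{x}(\mathbf{b}))$; $\mathbf{o}^{\mathbf{v}}$ denotes a welfare-maximizing allocation (with $x_{ij}\ge0$,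 $\sum_i x_{ij}\le 1$) for valuation profile $\mathbf{v}$. Bayesian setting: each $v_i$ is drawn independently from a publicly known distribution $D_i$ over a set $V_i$ of valuations. A Bayesian Nash equilibrium is a profile $\mathbf{B}(\mathbf{v})=\times_i B_i(v_i)$, where $B_i(v_i)$ is a distribution over bid vectors of agent $i$, such that for every agent $i$, every $v_i$ and every bid vector $b_i'$, $\mathbb{E}_{\mathbf{v}_{-i},\mathbf{b}}[u_i(\mathbf{b})]\ge \mathbb{E}_{\mathbf{v}_{-i},\mathbf{b}}[u_i(b_i',\mathbf{b}_{-i})]$ (utilities evaluated with agent $i$'s valuation $v_i$). The Bayesian Price of Anarchy over a class of instances is the supremum, over instances in the class and Bayesian Nash equilibria $\mathbf{B}$, of $\mathbb{E}_{\mathbf{v}}[\mathrm{SW}(\mathbf{o}^{\mathbf{v}})]/\mathbb{E}_{\mathbf{v},\mathbf{b}\sim\mathbf{B}}[\mathrm{SW}(\mathbf{b})]$. *)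

From mathcomp Require Import all_boot all_order all_algebra.
From mathcomp Require Import reals.
Set Implicit Arguments. Unset Strict Implicit. Unset Printing Implicit Defensive.
Import Order.TTheory GRing.Theory Num.Theory.
Local Open Scope ring_scope.

Section PropAlloc.
Variable R : realType.
Variables (n m K L : nat).
(* agents: 'I_n, resources: 'I_m,
   types of each agent: 'I_K (finite-support prior D_i),
   pure bids in the support of a mixed strategy: 'I_L *)

Definition in_cube (x : 'I_m -> R) : Prop := forall j, 0 <= x j <= 1.

Definition valuation (v : ('I_m -> R) -> R) : Prop :=
  v (fun _ => 0) = 0 /\
  (forall x, in_cube x -> 0 <= v x) /\
  (forall x y, in_cube x -> in_cube y -> (forall j, x j <= y j) -> v x <= v y).

Definition concave_valuation (v : ('I_m -> R) -> R) : Prop :=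
  forall x y (t : R), in_cube x -> in_cube y -> 0 <= t <= 1 ->
    t * v x + (1 - t) * v y <= v (fun j => t * x j + (1 - t) * y j).

Definition alloc (b : 'I_n -> 'I_m -> R) (i : 'I_n) : 'I_m -> R :=
  fun j => let tot := \sum_(k < n) b k j in if tot == 0 then 0 else b i j / tot.

Definition payment (b : 'I_n -> 'I_m -> R) (i : 'I_n) : R := \sum_(j < m) b i j.

(* prior: agent i has type k with probability p i k and valuation val i k *)
Variable p : 'I_n -> 'I_K -> R.
Variable val : 'I_n -> 'I_K -> ('I_m -> R) -> R.
(* strategy: agent i of type k plays bid vector bid i k l with probability q i k l *)
Variable q : 'I_n -> 'I_K -> 'I_L -> R.
Variable bid : 'I_n -> 'I_K -> 'I_L -> 'I_m -> R.

Definition bayesian_instance : Prop :=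
  (forall i k, 0 <= p i k) /\ (forall i, \sum_(k < K) p i k = 1) /\
  (forall i k, valuation (val i k)).

Definition all_concave : Prop := forall i k, concave_valuation (val i k).

Definition mixed_strategies : Prop :=
  (forall i k l, 0 <= q i k l) /\ (forall i k, \sum_(l < L) q i k l = 1) /\
  (forall i k l j, 0 <= bid i k l j).

Definition bids (t : {ffun 'I_n -> 'I_K}) (s : {ffun 'I_n -> 'I_L}) : 'I_n -> 'I_m -> R :=
  fun i => bid i (t i) (s i).

Definition prob_v (t : {ffun 'I_n -> 'I_K}) : R := \prod_(i < n) p i (t i).
Definition prob_b (t : {ffun 'I_n -> 'I_K}) (s : {ffun 'I_n -> 'I_L}) : R :=
  \prod_(i < n) q i (t i) (s i).

Definition SW (t : {ffun 'I_n -> 'I_K}) (x : 'I_n -> 'I_m -> R) : R :=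
  \sum_(i < n) val i (t i) (x i).

Definition expected_SW : R :=
  \sum_(t : {ffun 'I_n -> 'I_K}) prob_v t *
    \sum_(s : {ffun 'I_n -> 'I_L}) prob_b t s * SW t (alloc (bids t s)).

(* E_{v_{-i}, b}[u_i(b'')] for agent i of type k, where b'' is the bid profile
   b with agent i's bid possibly replaced by dev (None = no replacement) *)
Definition expected_utility (i : 'I_n) (k : 'I_K) (dev : option ('I_m -> R)) : R :=
  \sum_(t : {ffun 'I_n -> 'I_K} | t i == k) (\prod_(j < n | j != i) p j (t j)) *
    \sum_(s : {ffun 'I_n -> 'I_L}) prob_b t s *
      (let b := fun j => if j == i then (if dev is Some b' then b' else bids t s j)
                         else bids t s j in
       val i k (alloc b i) - payment b i).

Definition bayes_nash_eq : Prop :=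
  forall (i : 'I_n) (k : 'I_K) (b' : 'I_m -> R), (forall j, 0 <= b' j) ->
    expected_utility i k (Some b') <= expected_utility i k None.

(* an allocation for every valuation profile (indexed by the type profile) *)
Definition feasible_allocations (o : {ffun 'I_n -> 'I_K} -> 'I_n -> 'I_m -> R) : Prop :=
  forall t, (forall i j, 0 <= o t i j) /\ (forall j, \sum_(i < n) o t i j <= 1).

Definition expected_SW_alloc (o : {ffun 'I_n -> 'I_K} -> 'I_n -> 'I_m -> R) : R :=
  \sum_(t : {ffun 'I_n -> 'I_K}) prob_v t * SW t (o t).

End PropAlloc.

From mathcomp Require Import all_boot all_order all_algebra.
From mathcomp Require Import reals.
From mathcomp Require Import ring lra.
Set Implicit Arguments. Unset Strict Implicit. Unset Printing Implicit Defensive.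
Import Order.TTheory GRing.Theory Num.Theory.
Local Open Scope ring_scope.

(* Agent 0 values a bundle [y] at [sqrt m * min_j y_j] (perfect complements); agent 1
   wants a single resource [k], drawn uniformly, and values [y] at [y_k].  With
   [r = sqrt m] and [u = (1 + r)^-2], agent 0 bidding [u] on every resource and agent 1
   bidding [r u] on [k] is a Bayesian equilibrium: [r u] is agent 1's best response
   to [u], and agent 0's payoff [r b_k / (b_k + r u)] is bounded by its tangent at
   [b_k = u], whose average over [k] is the equilibrium payoff [r u].  In equilibrium
   both agents get value [r / (1 + r)], so the welfare is below 2, whereas giving
   everything to agent 0 yields [r]. *)

Lemma big_ord2 (R : Type) (idx : R) (op : Monoid.law idx) (F : 'I_2 -> R) :
  \big[op/idx]_(i < 2) F i = op (F ord0) (F ord_max).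
Proof.
by rewrite !big_ord_recl big_ord0 Monoid.mulm1; congr (op _ (F _)); apply/val_inj.
Qed.

Lemma ord2P (i : 'I_2) : i = ord0 \/ i = ord_max.
Proof. by case: i => -[|[|//]] lti; [left | right]; apply/val_inj. Qed.

Lemma big_ffun_ord1 (R : nmodType) (T : finType) (F : {ffun T -> 'I_1} -> R) :
  \sum_s F s = F [ffun=> ord0].
Proof.
apply: big_pred1 => s /=; symmetry; apply/eqP/ffunP => x.
by rewrite ffunE; apply/val_inj; case: (s x) => -[].
Qed.

Lemma sum_ffun2_fix0 (R : pzSemiRingType) (T : finType) (k : T) (G : T -> R) :
  \sum_(t : {ffun 'I_2 -> T} | t ord0 == k) G (t ord_max) = \sum_j G j.
Proof.
pose F (z : 'I_2) (j : T) := if z == ord0 then (j == k)%:R else G j.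
rewrite big_mkcond /=; transitivity (\sum_(t : {ffun 'I_2 -> T}) \prod_(z < 2) F z (t z)).
  apply: eq_bigr => t _; rewrite big_ord2 /F /=.
  by case: eqP => _; rewrite /= ?mulr1n ?mulr0n ?mul1r ?mul0r.
rewrite -bigA_distr_bigA big_ord2 /F /= (bigD1 k) //= eqxx.
by rewrite big1 ?addr0 /= ?mulr1n ?mul1r // => j /negPf ->.
Qed.

Lemma prodr_const_neq (R : pzSemiRingType) (n : nat) (i : 'I_n) (c : R) :
  \prod_(j < n | j != i) c = c ^+ n.-1.
Proof. by rewrite prodr_const cardC1 card_ord. Qed.

Section Uniform_prior_pure_strategies.
Variables (R : realType) (n m K : nat) (c : R).
Variable val : 'I_n -> 'I_K -> ('I_m -> R) -> R.
Variable bid : 'I_n -> 'I_K -> 'I_1 -> 'I_m -> R.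

Let s0 : {ffun 'I_n -> 'I_1} := [ffun=> ord0].

Definition deviate (b : 'I_n -> 'I_m -> R) (i : 'I_n) (dev : option ('I_m -> R)) :
    'I_n -> 'I_m -> R :=
  fun j => if j == i then (if dev is Some b' then b' else b j) else b j.

Lemma prob_b_pure (t : {ffun 'I_n -> 'I_K}) (s : {ffun 'I_n -> 'I_1}) :
  prob_b (fun _ _ _ => 1 : R) t s = 1.
Proof. exact: big1. Qed.

Lemma expected_SW_uniform_pure :
  expected_SW (fun _ _ => c) val (fun _ _ _ => 1) bid =
  \sum_t c ^+ n * SW val t (alloc (bids bid t s0)).
Proof.
apply: eq_bigr => t _; rewrite big_ffun_ord1 prob_b_pure mul1r.
by rewrite /prob_v prodr_const card_ord.
Qed.

Lemma expected_utility_uniform_pure i k dev :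
  expected_utility (fun _ _ => c) val (fun _ _ _ => 1) bid i k dev =
  \sum_(t : {ffun 'I_n -> 'I_K} | t i == k) c ^+ n.-1 *
    (val i k (alloc (deviate (bids bid t s0) i dev) i)
       - payment (deviate (bids bid t s0) i dev) i).
Proof.
apply: eq_bigr => t _; rewrite big_ffun_ord1 prob_b_pure mul1r.
by rewrite prodr_const_neq.
Qed.

End Uniform_prior_pure_strategies.

Section Leontief_valuation.
Variables (R : realType) (m : nat).

(* The neutral element [1] is the top of [0, 1], so it only matters when [m = 0]. *)
Definition leontief (c : R) (y : 'I_m -> R) : R := c * \big[Order.min/1]_(j < m) y j.

Lemma leontief_valuation c : (0 < m)%N -> 0 <= c -> valuation (leontief c).
Proof.
move=> m_gt0 c_ge0; rewrite /valuation /leontief; split; last split.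
- rewrite (_ : \big[Order.min/1]_(j < m) 0 = 0) ?mulr0 //.
  by apply/le_anti; rewrite (bigmin_le _ (Ordinal m_gt0) (fun=> 0)) le_bigmin ?ler01.
- move=> y y01; apply: mulr_ge0 => //.
  by apply: le_bigmin => [|j _]; [exact: ler01 | case/andP: (y01 j)].
- move=> y z _ _ le_yz; apply: ler_wpM2l => //.
  apply: le_bigmin => [|j _]; first exact: bigmin_le_id.
  exact: le_trans (bigmin_le _ j _) (le_yz j).
Qed.

Lemma leontief_concave c : 0 <= c -> concave_valuation (leontief c).
Proof.
move=> c_ge0 x y t _ _ /andP[t_ge0 t_le1]; rewrite /leontief.
rewrite mulrCA [(1 - t) * _]mulrCA -mulrDr; apply: ler_wpM2l => //.
have t'_ge0 : 0 <= 1 - t by lra.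
have min_le1 (z : 'I_m -> R) : \big[Order.min/1]_(j < m) z j <= 1 := bigmin_le_id _ _ _ _.
apply: le_bigmin => [|j _].
  have := ler_wpM2l t_ge0 (min_le1 x); have := ler_wpM2l t'_ge0 (min_le1 y).
  rewrite !mulr1; lra.
exact: lerD (ler_wpM2l t_ge0 (bigmin_le _ j x)) (ler_wpM2l t'_ge0 (bigmin_le _ j y)).
Qed.

Lemma coord_valuation (k : 'I_m) : valuation (fun y : 'I_m -> R => y k).
Proof. by split=> //; split=> // y /(_ k) /andP[]. Qed.

Lemma coord_concave (k : 'I_m) : concave_valuation (fun y : 'I_m -> R => y k).
Proof. by []. Qed.

End Leontief_valuation.

Lemma alloc2_pos (R : realType) (m : nat) (b : 'I_2 -> 'I_m -> R) i j :
  0 < b ord0 j + b ord_max j -> alloc b i j = b i j / (b ord0 j + b ord_max j).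
Proof. by move=> tot_gt0; rewrite /alloc big_ord2 gt_eqF. Qed.

Lemma inv_sqr1D_gt0 (R : realFieldType) (r : R) : 0 <= r -> 0 < (1 + r) ^- 2.
Proof. by move=> r_ge0; rewrite invr_gt0 exprn_gt0 // ltr_wpDr. Qed.

(* Against a bid [u], [b |-> b / (u + b) - b] peaks where [(u + b)^2 = u], i.e. at [b = r u]. *)
Lemma share_sub_bid_le (R : realFieldType) (r u b : R) :
  0 < r -> u = (1 + r) ^- 2 -> 0 <= b ->
  b / (u + b) - b <= r * u / (u + r * u) - r * u.
Proof.
move=> r_gt0 u_def b_ge0; have u_gt0 : 0 < u by rewrite u_def inv_sqr1D_gt0 ?ltW.
have b_sqr_ge0 : 0 <= b * (1 + r) ^+ 2 by rewrite mulr_ge0 ?sqr_ge0.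
rewrite -subr_ge0.
have -> : r * u / (u + r * u) - r * u - (b / (u + b) - b) = (b - r * u) ^+ 2 / (u + b).
  by rewrite u_def; field; apply/andP; split; apply: lt0r_neq0; lra.
by rewrite divr_ge0 ?sqr_ge0 // addr_ge0 // ltW.
Qed.

(* The tangent line at [b = u] of the concave map [b |-> r b / (b + r u)]. *)
Lemma scaled_share_le_tangent (R : realFieldType) (r u b : R) :
  0 < r -> u = (1 + r) ^- 2 -> 0 <= b ->
  r * (b / (b + r * u)) <= r * u + r ^+ 2 * b.
Proof.
move=> r_gt0 u_def b_ge0; have u_gt0 : 0 < u by rewrite u_def inv_sqr1D_gt0 ?ltW.
have b_sqr_ge0 : 0 <= b * (1 + r) ^+ 2 by rewrite mulr_ge0 ?sqr_ge0.
rewrite -subr_ge0.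
have -> : r * u + r ^+ 2 * b - r * (b / (b + r * u)) = r ^+ 2 * (b - u) ^+ 2 / (b + r * u).
  by rewrite u_def; field; apply/andP; split; apply: lt0r_neq0; lra.
have ru_gt0 := mulr_gt0 r_gt0 u_gt0.
by apply: divr_ge0; [apply: mulr_ge0; apply: sqr_ge0 | lra].
Qed.

Section Lower_bound_instance.
Variables (R : realType) (m : nat) (r : R).
Hypotheses (r_gt0 : 0 < r) (r_sqr : r ^+ 2 = m%:R).

Let u : R := (1 + r) ^- 2.

Definition single_bid (k : 'I_m) (j : 'I_m) : R := if j == k then r * u else 0.

Definition lb_val (i : 'I_2) (k : 'I_m) : ('I_m -> R) -> R :=
  if i == ord0 then leontief r else fun y => y k.

Definition lb_bid (i : 'I_2) (k : 'I_m) (_ : 'I_1) : 'I_m -> R :=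
  if i == ord0 then fun=> u else single_bid k.

Definition lb_opt (_ : {ffun 'I_2 -> 'I_m}) (i : 'I_2) (_ : 'I_m) : R := (i == ord0)%:R.

Fact m_gt0 : (0 < m)%N.
Proof. by rewrite -(ltr0n R) -r_sqr exprn_gt0. Qed.

Fact u_gt0 : 0 < u.
Proof. exact/inv_sqr1D_gt0/ltW. Qed.

Fact ru_gt0 : 0 < r * u.
Proof. by rewrite mulr_gt0 // u_gt0. Qed.

Fact r1_neq0 : 1 + r != 0.
Proof. by rewrite lt0r_neq0 // ltr_wpDl // ltW. Qed.

Fact single_bid_ge0 k j : 0 <= single_bid k j.
Proof. by rewrite /single_bid; case: ifP => _ //; rewrite ltW // ru_gt0. Qed.

Section Equilibrium_profile.
Variables (b : 'I_2 -> 'I_m -> R) (k : 'I_m).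
Hypotheses (b0E : b ord0 =1 fun=> u) (b1E : b ord_max =1 single_bid k).

Fact total_bid_gt0 j : 0 < b ord0 j + b ord_max j.
Proof. by rewrite b0E b1E ltr_wpDr ?single_bid_ge0 ?u_gt0. Qed.

Lemma alloc_eq0 j : alloc b ord0 j = if j == k then (1 + r)^-1 else 1.
Proof.
rewrite alloc2_pos ?total_bid_gt0 // b0E b1E /single_bid.
case: eqP => _; last by rewrite addr0 divff // gt_eqF ?u_gt0.
by rewrite /u; field; rewrite r1_neq0.
Qed.

Lemma alloc_eq1 j : alloc b ord_max j = if j == k then r / (1 + r) else 0.
Proof.
rewrite alloc2_pos ?total_bid_gt0 // b0E b1E /single_bid.
case: eqP => _; last by rewrite mul0r.
by rewrite /u; field; rewrite r1_neq0.
Qed.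

Lemma leontief_alloc_eq : leontief r (alloc b ord0) = r / (1 + r).
Proof.
have inv_le1 : (1 + r)^-1 <= 1 by rewrite invf_le1 ?ltr_wpDr ?lerDl ?ltW.
congr (r * _); apply/le_anti; rewrite (le_trans (bigmin_le _ k _)) ?alloc_eq0 ?eqxx //=.
by apply: le_bigmin => // j _; rewrite alloc_eq0; case: eqP.
Qed.

Lemma leontief_utility_eq : leontief r (alloc b ord0) - payment b ord0 = r * u.
Proof.
rewrite leontief_alloc_eq /payment (eq_bigr _ (fun j _ => b0E j)) sumr_const card_ord.
by rewrite -mulr_natr -r_sqr /u; field; rewrite r1_neq0.
Qed.

Lemma single_utility_eq : alloc b ord_max k - payment b ord_max = r / (1 + r) - r * u.
Proof.
rewrite alloc_eq1 eqxx /payment (eq_bigr _ (fun j _ => b1E j)) /single_bid.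
by rewrite -big_mkcond /= big_pred1_eq.
Qed.

Lemma lb_SW_eq (t : {ffun 'I_2 -> 'I_m}) : t ord_max = k ->
  SW lb_val t (alloc b) = 2 * r / (1 + r).
Proof.
move=> tk; rewrite /SW big_ord2 /lb_val /= leontief_alloc_eq alloc_eq1 tk eqxx.
by field; rewrite r1_neq0.
Qed.

End Equilibrium_profile.

Lemma leontief_deviation_le (b : 'I_2 -> 'I_m -> R) (k : 'I_m) :
  b ord_max =1 single_bid k -> (forall j, 0 <= b ord0 j) ->
  leontief r (alloc b ord0) <= r * u + m%:R * b ord0 k.
Proof.
move=> b1E b0_ge0; have tot_gt0 : 0 < b ord0 k + b ord_max k.
  by rewrite b1E /single_bid eqxx ltr_wpDl ?b0_ge0 ?ru_gt0.
rewrite -r_sqr; apply: le_trans (scaled_share_le_tangent r_gt0 (erefl u) (b0_ge0 k)).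
rewrite /leontief; apply: ler_wpM2l; first exact: ltW.
have -> : r * u = b ord_max k by rewrite b1E /single_bid eqxx.
by rewrite -alloc2_pos // bigmin_le.
Qed.

Lemma single_deviation_le (b : 'I_2 -> 'I_m -> R) (k : 'I_m) :
  b ord0 =1 (fun=> u) -> (forall j, 0 <= b ord_max j) ->
  alloc b ord_max k - payment b ord_max <= r / (1 + r) - r * u.
Proof.
move=> b0E b1_ge0; have u_pos := u_gt0.
have bid_le_pay : b ord_max k <= payment b ord_max.
  by rewrite /payment (bigD1 k) //= lerDl sumr_ge0.
have opt_eq : r / (1 + r) = r * u / (u + r * u) by rewrite /u; field; rewrite r1_neq0.
rewrite alloc2_pos b0E ?ltr_wpDr // opt_eq.
have := share_sub_bid_le r_gt0 (erefl u) (b1_ge0 k); lra.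
Qed.

Let prior (_ : 'I_2) (_ : 'I_m) : R := m%:R^-1.
Let pure (_ : 'I_2) (_ : 'I_m) (_ : 'I_1) : R := 1.

Fact m_neq0 : m%:R != 0 :> R.
Proof. by rewrite pnatr_eq0 -lt0n m_gt0. Qed.

Fact uniform_average_const (x : R) :
  \sum_(t : {ffun 'I_2 -> 'I_m}) m%:R^-1 ^+ 2 * x = x.
Proof.
rewrite sumr_const card_ffun !card_ord -[_ *+ _]mulr_natr natrX.
by field; rewrite m_neq0.
Qed.

Lemma leontief_agent_no_gain k (b' : 'I_m -> R) : (forall j, 0 <= b' j) ->
  expected_utility prior lb_val pure lb_bid ord0 k (Some b')
    <= expected_utility prior lb_val pure lb_bid ord0 k None.
Proof.
move=> b'_ge0; rewrite !expected_utility_uniform_pure /= expr1.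
set s0 := [ffun=> ord0].
apply: (@le_trans _ _ (\sum_(t : {ffun 'I_2 -> 'I_m} | t ord0 == k)
    m%:R^-1 * (r * u + m%:R * b' (t ord_max) - \sum_j b' j))).
  apply: ler_sum => t _; rewrite ler_wpM2l ?invr_ge0 ?ler0n // lerD2r.
  exact: (leontief_deviation_le (b := deviate (bids lb_bid t s0) ord0 (Some b'))).
rewrite (sum_ffun2_fix0 k (fun j => m%:R^-1 * (r * u + m%:R * b' j - \sum_j b' j))).
rewrite [X in _ <= X](eq_bigr (fun=> m%:R^-1 * (r * u))); last first.
  move=> t _ /=.
  by rewrite (leontief_utility_eq (b := deviate (bids lb_bid t s0) ord0 None) (k := t ord_max)).
have avg_eq : \sum_(j < m) m%:R^-1 * (r * u) = r * u.
  rewrite sumr_const card_ord -[_ *+ m]mulr_natr mulrAC mulVf ?mul1r //.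
  exact: m_neq0.
have avg_tangent : \sum_(j < m) m%:R^-1 * (r * u + m%:R * b' j - \sum_i b' i) = r * u.
  rewrite -mulr_sumr sumrB big_split /= -[\sum_(i < m) m%:R * b' i]mulr_sumr.
  rewrite !sumr_const card_ord.
  rewrite -[(r * u) *+ m]mulr_natr -[(\sum_i b' i) *+ m]mulr_natr.
  by field; rewrite m_neq0.
by rewrite (sum_ffun2_fix0 k (fun=> m%:R^-1 * (r * u))) avg_eq avg_tangent.
Qed.

Lemma single_agent_no_gain k (b' : 'I_m -> R) : (forall j, 0 <= b' j) ->
  expected_utility prior lb_val pure lb_bid ord_max k (Some b')
    <= expected_utility prior lb_val pure lb_bid ord_max k None.
Proof.
move=> b'_ge0; rewrite !expected_utility_uniform_pure.
apply: ler_sum => t /eqP tk; apply: ler_wpM2l; first by rewrite exprn_ge0 // invr_ge0 ler0n.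
set s0 := [ffun=> ord0].
rewrite /= (single_utility_eq (b := deviate (bids lb_bid t s0) ord_max None) (k := k))
  => [|//|j]; last by rewrite /deviate /bids /= tk.
exact: single_deviation_le.
Qed.

Lemma lb_bayes_nash_eq : bayes_nash_eq prior lb_val pure lb_bid.
Proof.
move=> i k b' b'_ge0; case: (ord2P i) => ->.
- exact: leontief_agent_no_gain.
- exact: single_agent_no_gain.
Qed.

Lemma lb_expected_SW : expected_SW prior lb_val pure lb_bid = 2 * r / (1 + r).
Proof.
rewrite expected_SW_uniform_pure (eq_bigr (fun=> m%:R^-1 ^+ 2 * (2 * r / (1 + r)))).
  by rewrite uniform_average_const.
by move=> t _; rewrite (lb_SW_eq (k := t ord_max)).
Qed.

Lemma lb_expected_opt : expected_SW_alloc prior lb_val lb_opt = r.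
Proof.
rewrite -[RHS]uniform_average_const; apply: eq_bigr => t _.
rewrite /prob_v prodr_const card_ord /SW big_ord2 /lb_opt /lb_val /= /leontief.
by rewrite bigmin_eq_id // mulr1 addr0.
Qed.

Lemma lb_opt_feasible : feasible_allocations lb_opt.
Proof. by move=> t; split=> [i j | j]; rewrite ?big_ord2 /lb_opt //= addr0. Qed.

Lemma lb_bayesian_instance : bayesian_instance prior lb_val.
Proof.
split; first by move=> i k; rewrite invr_ge0 ler0n.
split; first by move=> i; rewrite sumr_const card_ord -[m%:R^-1 *+ m]mulr_natr mulVf ?m_neq0.
move=> i k; case: (ord2P i) => ->; rewrite /lb_val /=.
- by apply: leontief_valuation; rewrite ?m_gt0 ?ltW.
- exact: coord_valuation.
Qed.

Lemma lb_all_concave : all_concave lb_val.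
Proof.
move=> i k; case: (ord2P i) => ->; rewrite /lb_val /=.
- exact/leontief_concave/ltW.
- exact: coord_concave.
Qed.

Lemma lb_mixed_strategies : mixed_strategies pure lb_bid.
Proof.
split=> //; split=> [i k | i k l j]; first by rewrite big_ord1.
by rewrite /lb_bid; case: ifP => _; [exact/ltW/u_gt0 | exact: single_bid_ge0].
Qed.

End Lower_bound_instance.

Theorem theorem1 (R : realType) (m : nat) (hm : (0 < m)%N) :
  exists (n K L : nat)
         (p : 'I_n -> 'I_K -> R) (val : 'I_n -> 'I_K -> ('I_m -> R) -> R)
         (q : 'I_n -> 'I_K -> 'I_L -> R) (bid : 'I_n -> 'I_K -> 'I_L -> 'I_m -> R)
         (o : {ffun 'I_n -> 'I_K} -> 'I_n -> 'I_m -> R),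
    [/\ bayesian_instance p val, all_concave val,
        mixed_strategies q bid, bayes_nash_eq p val q bid
      & [/\ feasible_allocations o,
            0 < expected_SW p val q bid
          & Num.sqrt (m%:R) / 2 * expected_SW p val q bid
              <= expected_SW_alloc p val o]].
Proof.
pose r : R := Num.sqrt m%:R.
have r_gt0 : 0 < r by rewrite sqrtr_gt0 ltr0n.
have r_sqr : r ^+ 2 = m%:R by rewrite sqr_sqrtr ?ler0n.
exists 2%N, m, 1%N, (fun _ _ => m%:R^-1), (lb_val r), (fun _ _ _ => 1), (lb_bid r),
  (@lb_opt R m).
split; [exact: lb_bayesian_instance | exact: (lb_all_concave (m := m)) |
  exact: lb_mixed_strategies | exact: lb_bayes_nash_eq | split].
- exact: lb_opt_feasible.
- by rewrite (lb_expected_SW r_gt0 r_sqr) divr_gt0 ?mulr_gt0 ?addr_gt0.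
- rewrite (lb_expected_SW r_gt0 r_sqr) (lb_expected_opt r_gt0 r_sqr) -/r.
  have -> : r / 2 * (2 * r / (1 + r)) = r * (r / (1 + r)).
    by field; rewrite lt0r_neq0 ?addr_gt0.
  by rewrite ger_pMr // ler_pdivrMr ?addr_gt0 // mul1r lerDr ler01.
Qed.
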